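(* Let $\mathbf{k}$ be a field, $(I,\le)$ a directed partially ordered set, and $\mathscr{M}=(M_i,\phi_{i\to j})$ a weakly non-trivial projectively transitive system of $\mathbf{k}$-vector spaces over $I$. For $i_0\in I$ let $\hat M_{i_0}$ be the direct limit of the (genuine) transitive system $\mathscr{M}_{(i_0)}$, and for $i_0\le j_0$ let $\hat\theta_{i_0\to j_0}\colon\hat M_{i_0}\to\hat M_{j_0}$ be the map induced by the maps $\theta^{i_0,j_0}_{m\to n}$. Then (1) the spaces $\hat M_{i_0}$ ($i_0\in I$) together with the maps $\hat\theta_{i_0\to j_0}$ form a projectively transitive system over $I$; and (2) each $\hat\theta_{i_0\to j_0}$ is an isomorphism of $\mathbf{k}$-vector spaces.
   Context: Write $a\doteq b$ if $a=u\,b$ for some unit $u\in\mathbf{k}^\times$. A projectively transitive system over $(I,\le)$ consists of $\mathbf{k}$-modules $M_i$ and homomorphisms $\phi_{i\to j}\colon M_i\to M_j$ for $i\le j$ with $\phi_{i\to i}\doteq\mathrm{id}$ and $\phi_{j\to k}\circ\phi_{i\to j}\doteq\phi_{i\to k}$; it is a (genuine) transitive system if these hold with $=$. It is weakly non-trivial if every $M_i\neq0$ and every $\phi_{i\to j}\neq0$. Given $i_0$, set $U(i_0)=\{i\in I: i\ge i_0\}$ and define the transitive system $\mathscr{M}_{(i_0)}=(M_i,\psi_{j\to k})$ over $U(i_0)$ by $\psi_{i_0\to j}=\phi_{i_0\to j}$ and, for $j\le k$ in $U(i_0)$, $\psi_{j\to k}=\alpha\,\phi_{j\to k}$ where $\alpha\in\mathbf{k}^\times$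 is the unique unit with $\alpha\,\phi_{j\to k}\circ\phi_{i_0\to j}=\phi_{i_0\to k}$. For $i_0\le j_0$, $m\in U(i_0)$, $n\in U(j_0)$ with $m\le n$, define $\theta^{i_0,j_0}_{m\to n}=\alpha\,\phi_{m\to n}$ where $\alpha\in\mathbf{k}^\times$ is the unique unit with $\alpha\,\phi_{m\to n}\circ\phi_{i_0\to m}=\phi_{j_0\to n}\circ\phi_{i_0\to j_0}$; these maps are compatible with the transitive systems and induce $\hat\theta_{i_0\to j_0}$ on direct limits. *)

From HB Require Import structures.
From mathcomp Require Import all_boot all_order all_algebra.
From Stdlib Require Import ClassicalEpsilon.
Unset Strict Implicit. Unset Printing Implicit Defensive.
Import Order.TTheory GRing.Theory Num.Theory.
Local Open Scope ring_scope.

Section ProjSys.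
Variable K : fieldType.

Definition proj_eq (U V : lmodType K) (f g : U -> V) : Prop :=
  exists2 u : K, u != 0 & forall x, f x = u *: g x.

(* "the unique unit alpha with alpha f = g" (chosen classically; the
   hypotheses of the theorem guarantee existence and uniqueness). *)
Definition scal_coef (U V : lmodType K) (f g : U -> V) : K :=
  epsilon (inhabits 0) (fun a : K => a != 0 /\ forall x, a *: f x = g x).

Variables (d : Order.disp_t) (I : porderType d).

Definition directed : Prop := forall i j : I, exists k, (i <= k)%O /\ (j <= k)%O.

Variable M : I -> lmodType K.
Variable phi : forall i j : I, {linear M i -> M j}.
(* only the values phi i j with i <= j are relevant *)

Definition proj_trans_sys : Prop :=
  (forall i, proj_eq _ _ (phi i i) id) /\
  (forall i j k, (i <= j)%O -> (j <= k)%O ->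
     proj_eq _ _ (phi j k \o phi i j) (phi i k)).

Definition weakly_nontrivial : Prop :=
  (forall i, exists x : M i, x != 0) /\
  (forall i j, (i <= j)%O -> exists x : M i, phi i j x != 0).

(* The transitive system M_(i0) over U(i0) = {i | i0 <= i}:
   psi_{i0 -> k} = phi_{i0 -> k} for k <> i0, and otherwise
   psi_{j -> k} = alpha phi_{j -> k} with alpha phi_{j->k} o phi_{i0->j} = phi_{i0->k}. *)
Definition psi (i0 j k : I) : M j -> M k :=
  fun x => (if (j == i0) && (k != i0) then 1
            else scal_coef _ _ (phi j k \o phi i0 j) (phi i0 k)) *: phi j k x.

Definition theta (i0 j0 m n : I) : M m -> M n :=
  fun x => scal_coef _ _ (phi m n \o phi i0 m) (phi j0 n \o phi i0 j0) *: phi m n x.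

(* (L, f) is a direct limit (colimit in k-vector spaces) of the transitive
   system M_(i0) over U(i0); f m is only relevant for i0 <= m. *)
Definition is_dirlim (i0 : I) (L : lmodType K) (f : forall m, {linear M m -> L}) : Prop :=
  (forall j k, (i0 <= j)%O -> (j <= k)%O -> forall x, (f k) (psi i0 j k x) = (f j) x) /\
  (forall (W : lmodType K) (g : forall m, {linear M m -> W}),
     (forall j k, (i0 <= j)%O -> (j <= k)%O -> forall x, (g k) (psi i0 j k x) = (g j) x) ->
     exists h : {linear L -> W},
       (forall j, (i0 <= j)%O -> forall x, h ((f j) x) = (g j) x) /\
       (forall h' : {linear L -> W},
          (forall j, (i0 <= j)%O -> forall x, h' ((f j) x) = (g j) x) -> h' =1 h)).

End ProjSys.

Arguments proj_eq {K U V} f g.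
Arguments scal_coef {K U V} f g.
Arguments directed {d} I.
Arguments proj_trans_sys {K d I M} phi.
Arguments weakly_nontrivial {K d I M} phi.
Arguments psi {K d I M} phi i0 j k _.
Arguments theta {K d I M} phi i0 j0 m n _.
Arguments is_dirlim {K d I M} phi i0 {L} f.

From HB Require Import structures.
From mathcomp Require Import all_boot all_order all_algebra.
From Stdlib Require Import ClassicalEpsilon.
Import Order.TTheory GRing.Theory Num.Theory.
Local Open Scope ring_scope.

(* Every map in sight is a scalar multiple of a map phi_{j->k}, so the whole
   theorem reduces to identities between scalars.  We name two families of
   units attached to the projectively transitive system phi:
     diag_coef i      with  phi_{i->i} = diag_coef i * id,
     comp_coef i j k  with  comp_coef i j k * phi_{j->k} o phi_{i->j} = phi_{i->k},
   and show that comp_coef is a 2-cocycle.  Weak non-triviality makes these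
   scalars unique, which lets us compute the coefficients hidden in psi and
   theta; in particular hattheta_{i0->j0} acts on the image of M_n in
   hatM_{i0} as multiplication by (comp_coef i0 j0 n)^-1.  Since two linear
   maps out of a direct limit agree as soon as they agree on a cofinal part
   of the cocone, this yields (1): hattheta_{i->i} = diag_coef i * id and
   hattheta_{j->k} o hattheta_{i->j} = (comp_coef i j k)^-1 * hattheta_{i->k}.
   For (2), rescaling the cocone of hatM_{i0} by comp_coef i0 j0 n (with a
   correction at n = j0, where psi_{j0->k} is phi_{j0->k} itself) gives a
   cocone on the system M_(j0); the map hatM_{j0} -> hatM_{i0} it induces is
   inverse to hattheta_{i0->j0}.  The case i0 = j0 is immediate from (1). *)

Section ScalarCoefficients.
Context {K : fieldType}.

Lemma scale_vec_inj {V : lmodType K} {v : V} {a b : K} :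
  v != 0 -> a *: v = b *: v -> a = b.
Proof.
move=> v_nz eq_ab; apply/eqP; rewrite -subr_eq0.
have : (a - b) *: v == 0 by rewrite scalerBl eq_ab subrr.
by rewrite scaler_eq0 (negbTE v_nz) orbF.
Qed.

Lemma scal_coefP {U V : lmodType K} {F G : U -> V} :
  (exists2 a, a != 0 & forall x, a *: F x = G x) ->
  scal_coef F G != 0 /\ forall x, scal_coef F G *: F x = G x.
Proof.
case=> a a_nz aFG; rewrite /scal_coef.
apply: (epsilon_spec (inhabits 0) (fun a : K => a != 0 /\ forall x, a *: F x = G x)).
by exists a.
Qed.

Lemma scal_coefE {U V : lmodType K} {F G : U -> V} {a : K} (z : U) :
  F z != 0 -> a != 0 -> (forall x, a *: F x = G x) -> scal_coef F G = a.
Proof.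
move=> Fz_nz a_nz aFG; have [_ sFG] := @scal_coefP _ _ F G (ex_intro2 _ _ a a_nz aFG).
by apply: (scale_vec_inj Fz_nz); rewrite sFG aFG.
Qed.

End ScalarCoefficients.

Section ProjectiveSystem.
Context {K : fieldType} {d : Order.disp_t} {I : porderType d}.
Context {M : I -> lmodType K} {phi : forall i j : I, {linear M i -> M j}}.
Hypothesis phi_pts : proj_trans_sys phi.
Hypothesis phi_wnt : weakly_nontrivial phi.

Definition diag_coef (i : I) : K := scal_coef id (phi i i).

Definition comp_coef (i j k : I) : K := scal_coef (phi j k \o phi i j) (phi i k).

Lemma diag_coefP (i : I) : diag_coef i != 0 /\ forall x, phi i i x = diag_coef i *: x.
Proof.
have [u u_nz phi_u] := phi_pts.1 i.
have [c_nz cP] := scal_coefP (ex_intro2 _ _ u u_nz (fun x => esym (phi_u x))).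
by split=> // x; rewrite cP.
Qed.

Lemma comp_coefP {i j k : I} : (i <= j)%O -> (j <= k)%O ->
  comp_coef i j k != 0 /\
  forall x, comp_coef i j k *: phi j k (phi i j x) = phi i k x.
Proof.
move=> le_ij le_jk; apply: scal_coefP.
have [u u_nz phi_u] := phi_pts.2 i j k le_ij le_jk.
exists u^-1; first by rewrite invr_eq0.
by move=> x; rewrite (phi_u x) scalerA mulVf // scale1r.
Qed.

Lemma phi_coef_unique {i n : I} {a b : K} : (i <= n)%O ->
  (forall z, a *: phi i n z = b *: phi i n z) -> a = b.
Proof.
move=> le_in eq_ab; have [z z_nz] := phi_wnt.2 i n le_in.
exact: scale_vec_inj z_nz (eq_ab z).
Qed.

Lemma comp_coef_diagl {i n : I} : (i <= n)%O -> comp_coef i i n * diag_coef i = 1.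
Proof.
move=> le_in; apply: (phi_coef_unique le_in) => z.
have [_ cP] := comp_coefP (lexx i) le_in; have [_ dP] := diag_coefP i.
by rewrite scale1r -[RHS]cP dP linearZ /= scalerA.
Qed.

Lemma comp_coef_diagr {i j : I} : (i <= j)%O -> comp_coef i j j * diag_coef j = 1.
Proof.
move=> le_ij; apply: (phi_coef_unique le_ij) => z.
have [_ cP] := comp_coefP le_ij (lexx j); have [_ dP] := diag_coefP j.
by rewrite -scalerA -dP cP scale1r.
Qed.

Lemma comp_cocycle {i j k n : I} :
  (i <= j)%O -> (j <= k)%O -> (k <= n)%O ->
  comp_coef i j k * comp_coef i k n = comp_coef i j n * comp_coef j k n.
Proof.
move=> le_ij le_jk le_kn.
have le_ik := le_trans le_ij le_jk; have le_jn := le_trans le_jk le_kn.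
apply: (phi_coef_unique (le_trans le_ik le_kn)) => z.
have [_ ijk] := comp_coefP le_ij le_jk; have [_ ikn] := comp_coefP le_ik le_kn.
have [_ ijn] := comp_coefP le_ij le_jn; have [_ jkn] := comp_coefP le_jk le_kn.
set T := phi k n (phi j k (phi i j z)).
have via_k : phi i n z = (comp_coef i j k * comp_coef i k n) *: T.
  by rewrite -ikn -ijk linearZ scalerA mulrC.
have via_j : phi i n z = (comp_coef i j n * comp_coef j k n) *: T.
  by rewrite -ijn -jkn scalerA.
by rewrite [in LHS]via_j [in RHS]via_k !scalerA mulrC.
Qed.

Lemma theta_diag {i0 j0 n : I} (x : M n) : (i0 <= j0)%O -> (j0 <= n)%O ->
  theta phi i0 j0 n n x = (comp_coef i0 j0 n)^-1 *: x.
Proof.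
move=> le_ij le_jn; have le_in := le_trans le_ij le_jn.
have [c_nz cP] := comp_coefP le_ij le_jn; have [d_nz dP] := diag_coefP n.
have [z z_nz] := phi_wnt.2 i0 n le_in.
have coefE : scal_coef (phi n n \o phi i0 n) (phi j0 n \o phi i0 j0)
             = (comp_coef i0 j0 n * diag_coef n)^-1.
  apply: (scal_coefE z); first by rewrite /= dP scaler_eq0 negb_or d_nz.
    by rewrite invr_eq0 mulf_neq0.
  move=> x' /=; rewrite dP scalerA invfM -mulrA mulVf // mulr1.
  by rewrite -cP scalerA mulVf // scale1r.
by rewrite /theta coefE dP scalerA invfM -mulrA mulVf // mulr1.
Qed.

Lemma psi_id {i0 j : I} (x : M j) : (i0 <= j)%O -> psi phi i0 j j x = x.
Proof.
move=> le_ij; rewrite /psi andbN.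
have -> : scal_coef (phi j j \o phi i0 j) (phi i0 j) = comp_coef i0 j j by [].
by have [_ dP] := diag_coefP j; rewrite dP scalerA comp_coef_diagr // scale1r.
Qed.

Lemma psi_base {i0 k : I} (x : M i0) : k != i0 -> psi phi i0 i0 k x = phi i0 k x.
Proof. by move=> ne_ki; rewrite /psi eqxx ne_ki scale1r. Qed.

Lemma psi_gen {i0 j : I} (k : I) (x : M j) : j != i0 ->
  psi phi i0 j k x = comp_coef i0 j k *: phi j k x.
Proof. by move=> ne_ji; rewrite /psi (negbTE ne_ji). Qed.

Hypothesis I_dir : directed I.

Lemma dirlim_ext {i0 : I} {L W : lmodType K}
    {g : forall m, {linear M m -> L}} (h1 h2 : {linear L -> W}) (k : I) :
  is_dirlim phi i0 g ->
  (forall n, (i0 <= n)%O -> (k <= n)%O -> forall y, h1 (g n y) = h2 (g n y)) ->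
  h1 =1 h2.
Proof.
move=> [g_cocone g_univ] h12.
have h2g_cocone : forall j k', (i0 <= j)%O -> (j <= k')%O -> forall x,
    (h2 \o g k') (psi phi i0 j k' x) = (h2 \o g j) x.
  by move=> j k' le_ij le_jk x /=; rewrite g_cocone.
have [h [_ h_unique]] := g_univ W (fun m => h2 \o g m) h2g_cocone.
suff [h1E h2E] : h1 =1 h /\ h2 =1 h by move=> x; rewrite h1E h2E.
split; last by apply: h_unique.
apply: h_unique => j le_ij x /=; have [n [le_jn le_kn]] := I_dir j k.
rewrite -(g_cocone j n le_ij le_jn x); apply: h12 => //; exact: le_trans le_jn.
Qed.

Context {hatM : I -> lmodType K} {f : forall i0 m : I, {linear M m -> hatM i0}}.
Context {hattheta : forall i0 j0 : I, {linear hatM i0 -> hatM j0}}.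
Hypothesis hatM_lim : forall i0, is_dirlim phi i0 (f i0).
Hypothesis hattheta_theta : forall i0 j0, (i0 <= j0)%O ->
  forall m n, (i0 <= m)%O -> (j0 <= n)%O -> (m <= n)%O ->
  forall x, hattheta i0 j0 (f i0 m x) = f j0 n (theta phi i0 j0 m n x).

Lemma hattheta_cocone {i0 j0 n : I} (y : M n) : (i0 <= j0)%O -> (j0 <= n)%O ->
  hattheta i0 j0 (f i0 n y) = (comp_coef i0 j0 n)^-1 *: f j0 n y.
Proof.
move=> le_ij le_jn; have le_in := le_trans le_ij le_jn.
by rewrite (hattheta_theta _ _ le_ij n n le_in le_jn (lexx n)) theta_diag // linearZ.
Qed.

Lemma hattheta_diag (i : I) (x : hatM i) : hattheta i i x = diag_coef i *: x.
Proof.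
apply: (dirlim_ext (hattheta i i) (diag_coef i \*: idfun) i (hatM_lim i)).
move=> n le_in _ y /=; rewrite hattheta_cocone //.
by rewrite (mulr1_eq (comp_coef_diagl le_in)).
Qed.

Lemma hattheta_comp {i j k : I} (x : hatM i) : (i <= j)%O -> (j <= k)%O ->
  hattheta j k (hattheta i j x) = (comp_coef i j k)^-1 *: hattheta i k x.
Proof.
move=> le_ij le_jk; have le_ik := le_trans le_ij le_jk.
apply: (dirlim_ext (hattheta j k \o hattheta i j)
          ((comp_coef i j k)^-1 \*: hattheta i k) k (hatM_lim i)).
move=> n le_in le_kn y /=; have le_jn := le_trans le_jk le_kn.
rewrite !hattheta_cocone // linearZ /= hattheta_cocone // !scalerA -!invfM.
by rewrite (comp_cocycle le_ij le_jk le_kn).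
Qed.

Lemma hattheta_proj_trans : proj_trans_sys hattheta.
Proof.
split=> [i | i j k le_ij le_jk].
  have [d_nz _] := diag_coefP i.
  by exists (diag_coef i) => // x; exact: hattheta_diag.
have [c_nz _] := comp_coefP le_ij le_jk.
by exists (comp_coef i j k)^-1; rewrite ?invr_eq0 // => x; exact: hattheta_comp.
Qed.

Definition nonmaximal (j : I) : bool :=
  if excluded_middle_informative (exists k, (j < k)%O) then true else false.

Lemma nonmaximalP (j : I) : reflect (exists k, (j < k)%O) (nonmaximal j).
Proof. by rewrite /nonmaximal; case: excluded_middle_informative => h; constructor. Qed.

(* Rescaling factors turning the cocone of hatM_{i0} into a cocone on M_(j0):
   comp_coef i0 j0 n, except 1 at n = j0 when j0 is not maximal (because
   psi_{j0 -> k} = phi_{j0 -> k} for k <> j0 in M_(j0)). *)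
Definition inv_coef (i0 j0 n : I) : K :=
  if (n == j0) && nonmaximal j0 then 1 else comp_coef i0 j0 n.

Lemma inv_coef_ne {i0 j0 n : I} : n != j0 -> inv_coef i0 j0 n = comp_coef i0 j0 n.
Proof. by move=> ne_nj; rewrite /inv_coef (negbTE ne_nj). Qed.

Lemma inv_coef_eventually (i0 j0 : I) :
  exists2 kb, (j0 <= kb)%O & forall n, (kb <= n)%O -> inv_coef i0 j0 n = comp_coef i0 j0 n.
Proof.
case: (nonmaximalP j0) => [[k lt_jk] | maximal].
  exists k; first exact: ltW.
  move=> n le_kn; apply: inv_coef_ne; apply: contraTneq lt_jk => eq_nj.
  by rewrite -eq_nj lt_leAnge le_kn andbF.
by exists j0 => // n _; rewrite /inv_coef; case: nonmaximalP; rewrite ?andbF.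
Qed.

Lemma inv_coef_cocone {i0 j0 : I} : (i0 <= j0)%O -> i0 != j0 ->
  forall j k, (j0 <= j)%O -> (j <= k)%O -> forall x,
  (inv_coef i0 j0 k \*: f i0 k) (psi phi j0 j k x) = (inv_coef i0 j0 j \*: f i0 j) x.
Proof.
move=> le_ij0 ne_ij0 j k le_j0j le_jk x /=.
have [<- | ne_jk] := eqVneq j k; first by rewrite psi_id.
have le_ij := le_trans le_ij0 le_j0j; have le_j0k := le_trans le_j0j le_jk.
have ne_kj0 : k != j0.
  by apply: contra_neq ne_jk => eq_kj0; apply: le_anti; rewrite le_jk eq_kj0.
have f_cocone := (hatM_lim i0).1 j k le_ij le_jk x.
rewrite inv_coef_ne //; have [eq_jj0 | ne_jj0] := eqVneq j j0.
  subst j; have nonmax : nonmaximal j0.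
    by apply/nonmaximalP; exists k; rewrite lt_neqAle eq_sym ne_kj0.
  rewrite /inv_coef eqxx nonmax scale1r psi_base // -f_cocone.
  by rewrite psi_gen ?linearZ // eq_sym.
have ne_ji0 : j != i0.
  by apply: contra_neq ne_ij0 => eq_ji0; apply: le_anti; rewrite le_ij0 -eq_ji0.
rewrite inv_coef_ne // psi_gen // -f_cocone psi_gen // !linearZ /= !scalerA.
rewrite [_ * comp_coef i0 j0 k]mulrC [_ * comp_coef i0 j0 j]mulrC.
by rewrite (comp_cocycle le_ij0 le_j0j le_jk).
Qed.

(* Each hattheta_{i0->j0} is invertible: its inverse is induced by the rescaled
   cocone (identity up to diag_coef when i0 = j0). *)
Lemma hattheta_bij {i0 j0 : I} : (i0 <= j0)%O -> bijective (hattheta i0 j0).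
Proof.
move=> le_ij; have [<- | ne_ij] := eqVneq i0 j0.
  have [d_nz _] := diag_coefP i0.
  exists (fun x => (diag_coef i0)^-1 *: x) => x; rewrite ?hattheta_diag scalerA.
    by rewrite mulVf ?scale1r.
  by rewrite mulfV ?scale1r.
have [G [GE _]] := (hatM_lim j0).2 _ _ (inv_coef_cocone le_ij ne_ij).
have [kb le_jkb inv_coefE] := inv_coef_eventually i0 j0.
have c_nz n : (j0 <= n)%O -> comp_coef i0 j0 n != 0.
  by move=> le_jn; have [] := comp_coefP le_ij le_jn.
exists G.
  apply: (dirlim_ext (G \o hattheta i0 j0) idfun kb (hatM_lim i0)).
  move=> n _ le_kn y /=; have le_jn := le_trans le_jkb le_kn.
  by rewrite hattheta_cocone // linearZ GE //= inv_coefE // scalerA mulVf ?scale1r ?c_nz.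
apply: (dirlim_ext (hattheta i0 j0 \o G) idfun kb (hatM_lim j0)).
move=> n le_jn le_kn y /=.
by rewrite GE //= inv_coefE // linearZ /= hattheta_cocone // scalerA mulfV ?scale1r ?c_nz.
Qed.

End ProjectiveSystem.

Arguments diag_coef {K d I M} phi i.
Arguments comp_coef {K d I M} phi i j k.
Arguments inv_coef {K d I M} phi i0 j0 n.

Theorem mainTheorem6 (K : fieldType) (d : Order.disp_t) (I : porderType d)
  (M : I -> lmodType K) (phi : forall i j : I, {linear M i -> M j})
  (hatM : I -> lmodType K) (f : forall i0 m : I, {linear M m -> hatM i0})
  (hattheta : forall i0 j0 : I, {linear hatM i0 -> hatM j0}) :
  directed I ->
  proj_trans_sys phi ->
  weakly_nontrivial phi ->
  (forall i0, is_dirlim phi i0 (f i0)) ->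
  (forall i0 j0, (i0 <= j0)%O ->
     forall m n, (i0 <= m)%O -> (j0 <= n)%O -> (m <= n)%O ->
       forall x, (hattheta i0 j0) ((f i0 m) x) = (f j0 n) (theta phi i0 j0 m n x)) ->
  proj_trans_sys hattheta /\
  (forall i0 j0, (i0 <= j0)%O -> bijective (hattheta i0 j0)).
Proof.
move=> I_dir phi_pts phi_wnt hatM_lim hattheta_theta; split.
  exact: (hattheta_proj_trans phi_pts phi_wnt I_dir hatM_lim hattheta_theta).
by move=> i0 j0; exact: (hattheta_bij phi_pts phi_wnt I_dir hatM_lim hattheta_theta).
Qed.
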